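(* Let $\mathcal A\subset\mathbb R^d$ be finite and nonempty with $\mathcal D=\mathrm{conv}(\mathcal A)=\{x:Bx\le c\}$. Let $f(x)=g(Ax)+\langle b,x\rangle$ with $A\in\mathbb R^{m\times d}$, $b\in\mathbb R^d$, where $g$ is continuously differentiable on an open set containing $A\mathcal D$ and $\mu_g$-strongly convex on $A\mathcal D$ with $\mu_g>0$, and let $\tilde\mu$ be the constant $\tilde\mu:=1/\big(2\theta^2(\|b\|M+3GM_A+\frac{2}{\mu_g}(G^2+1))\big)$ defined in the context. Then $\tilde\mu_f\ge\tilde\mu\cdot\mathrm{PWidth}(\mathcal A)^2$.
   Context: Euclidean norms. $\mathcal X^*:=\arg\min_{\mathcal D}f$; $G:=\max_{x\in\mathcal D}\|\nabla g(Ax)\|$, $M:=\mathrm{diam}(\mathcal D)$, $M_A:=\mathrm{diam}(A\mathcal D)$; $\theta>0$ is a Hoffman constant: for every $t\in\mathbb R^m,s\in\mathbb R$ with $P_{t,s}:=\{y:Ay=t,\langle b,y\rangle=s,By\le c\}\ne\emptyset$ and every $x$ with $Bx\le c$, $d(x,P_{t,s})\le\theta\|(Ax-t,\langle b,x\rangle-s)\|$. For a finite $\mathcal B$ and $x\in\mathrm{conv}(\mathcal B)$, $\mathcal S_x(\mathcal B)$ is the family of subsets $S\subseteq\mathcal B$ such that $x$ is a proper convex combination of all elements of $S$ (all coefficients positive); $\mathcal S_x=\mathcal S_x(\mathcal A)$. For $r\neq0$, $\mathrm{PdirW}(\mathcal B,r,x):=\min_{S\in\mathcal S_x(\mathcal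 B)}\max_{s\in\mathcal B,v\in S}\langle r/\|r\|,s-v\rangle$; $\mathrm{PWidth}(\mathcal A):=\inf\{\mathrm{PdirW}(\mathcal K\cap\mathcal A,r,x)\}$ over nonempty faces $\mathcal K$ of $\mathcal D$ (including $\mathcal D$), $x\in\mathcal K$, $r\in\mathrm{cone}(\mathcal K-x)\setminus\{0\}$. For $x\in\mathcal D$: $s_f(x)\in\arg\min_{a\in\mathcal A}\langle\nabla f(x),a\rangle$; for $S\in\mathcal S_x$, $v_S(x)\in\arg\max_{v\in S}\langle\nabla f(x),v\rangle$; $v_f(x)$ is an element of $\{v_S(x):S\in\mathcal S_x\}$ minimizing $\langle\nabla f(x),\cdot\rangle$; for $\langle\nabla f(x),x^*-x\rangle<0$, $\gamma^{A}(x,x^* ):=\frac{\langle-\nabla f(x),x^*-x\rangle}{\langle-\nabla f(x),s_f(x)-v_f(x)\rangle}$. Generalized geometric strong convexity constant: $\tilde\mu_f:=\inf_{x\in\mathcal D\setminus\mathcal X^*}\ \sup_{x^*\in\mathcal X^*:\langle\nabla f(x),x^*-x\rangle<0}\frac{1}{2\gamma^{A}(x,x^* )^2}\big(f(x^* )-f(x)-2\langle\nabla f(x),x^*-x\rangle\big)$. *)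

(* classical reals. Vectors of R^k are functions nat -> R, of which
   only the components 0..k-1 are meaningful; matrices are nat -> nat -> R. *)
From Stdlib Require Import Reals.
Open Scope R_scope.

Definition Vec := nat -> R.
Definition Mat := nat -> nat -> R.

Fixpoint vsum (n : nat) (f : nat -> R) : R :=
  match n with O => 0 | S k => vsum k f + f k end.

Definition dot (n : nat) (u v : Vec) : R := vsum n (fun i => u i * v i).
Definition norm (n : nat) (v : Vec) : R := sqrt (dot n v v).
Definition vsub (u v : Vec) : Vec := fun i => u i - v i.
Definition vadd (u v : Vec) : Vec := fun i => u i + v i.
Definition vscale (t : R) (u : Vec) : Vec := fun i => t * u i.
Definition matvec (k : nat) (M : Mat) (x : Vec) : Vec :=
  fun i => vsum k (fun j => M i j * x j).
Definition veq (k : nat) (u v : Vec) : Prop := forall i, (i < k)%nat -> u i = v i.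

Definition is_max (P : R -> Prop) (w : R) : Prop := P w /\ forall y, P y -> y <= w.
Definition is_min (P : R -> Prop) (w : R) : Prop := P w /\ forall y, P y -> w <= y.
Definition is_glb (P : R -> Prop) (w : R) : Prop :=
  (forall y, P y -> w <= y) /\ (forall w', (forall y, P y -> w' <= y) -> w' <= w).
(* "sup P >= c" in the extended reals *)
Definition sup_ge (P : R -> Prop) (c : R) : Prop :=
  forall c', c' < c -> exists y, P y /\ c' < y.

(* The finite set A = {a 0, ..., a (n-1)} of R^d; subsets of A are index predicates. *)
Definition in_conv (d n : nat) (a : nat -> Vec) (x : Vec) : Prop :=
  exists lam : nat -> R,
    (forall i, (i < n)%nat -> 0 <= lam i) /\ vsum n lam = 1 /\
    veq d x (fun k => vsum n (fun i => lam i * a i k)).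

(* S \in S_x(Bs): S subset of Bs, x a proper convex combination of all elements of S *)
Definition in_Sx (d n : nat) (a : nat -> Vec) (Bs : nat -> Prop) (x : Vec)
  (S : nat -> Prop) : Prop :=
  (forall i, S i -> (i < n)%nat /\ Bs i) /\
  exists lam : nat -> R,
    (forall i, (i < n)%nat -> S i -> 0 < lam i) /\
    (forall i, (i < n)%nat -> ~ S i -> lam i = 0) /\
    vsum n lam = 1 /\
    veq d x (fun k => vsum n (fun i => lam i * a i k)).

Definition PdirW_is (d n : nat) (a : nat -> Vec) (Bs : nat -> Prop) (r x : Vec)
  (w : R) : Prop :=
  is_min (fun w' => exists S, in_Sx d n a Bs x S /\
            is_max (fun u => exists s v, (s < n)%nat /\ Bs s /\ S v /\
                       u = dot d (vscale (/ norm d r) r) (vsub (a s) (a v))) w') w.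

(* (exposed) faces of the polytope D; for polytopes all faces are exposed,
   and w = 0 gives D itself. *)
Definition is_face (d : nat) (inD : Vec -> Prop) (K : Vec -> Prop) : Prop :=
  exists w : Vec, forall x, K x <-> (inD x /\ forall y, inD y -> dot d w y <= dot d w x).

Definition in_cone (d : nat) (K : Vec -> Prop) (x r : Vec) : Prop :=
  exists (N : nat) (ts : nat -> R) (ys : nat -> Vec),
    (forall j, (j < N)%nat -> 0 <= ts j /\ K (ys j)) /\
    veq d r (fun k => vsum N (fun j => ts j * (ys j k - x k))).

(* the set whose infimum is PWidth(A) *)
Definition PWidth_set (d n : nat) (a : nat -> Vec) (w : R) : Prop :=
  exists K : Vec -> Prop,
    is_face d (in_conv d n a) K /\ (exists z, K z) /\
    exists x r, K x /\ in_cone d K x r /\ ~ veq d r (fun _ => 0) /\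
      PdirW_is d n a (fun i => (i < n)%nat /\ K (a i)) r x w.

Definition has_grad (k : nat) (h : Vec -> R) (gr y : Vec) : Prop :=
  forall eps, 0 < eps -> exists delta, 0 < delta /\
    forall z, norm k (vsub z y) < delta ->
      Rabs (h z - h y - dot k gr (vsub z y)) <= eps * norm k (vsub z y).

Definition is_open_in (k : nat) (U : Vec -> Prop) : Prop :=
  forall y, U y -> exists delta, 0 < delta /\
    forall z, norm k (vsub z y) < delta -> U z.

From Stdlib Require Import Reals Lra Lia Psatz Classical ClassicalEpsilon FunctionalExtensionality List.
Open Scope R_scope.

(* Let x1 minimize f on D and u = f x - f x1 > 0.  First-order optimality of x1 together with
   the strong convexity of g gives the quadratic growth
     <b, x - x1>^2 + |A (x - x1)|^2 <= kappa * u,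
   kappa = |b| M + 3 G M_A + 2/mu_g (G^2 + 1).  The Hoffman bound then yields xs with
   A xs = A x1 and <b, xs> = <b, x1>, hence a minimizer, and |x - xs| <= theta sqrt (kappa u)
   (up to any eps > 0).  Convexity gives alpha := <-grad f(x), xs - x> >= u, and the
   pyramidal-width inequality
     PWidth * alpha <= <-grad f(x), s_f(x) - v_f(x)> * |xs - x|
   turns gamma^A = alpha / <-grad f(x), s_f(x) - v_f(x)> into the bound
     (2 alpha - u) / (2 gamma^2) >= PWidth^2 u / (2 |xs - x|^2) ~ PWidth^2 / (2 theta^2 kappa).
   For the pyramidal-width inequality, q = -grad f(x) is projected onto the cone spanned by the
   a_i - x, with a vanishing penalty on the coefficients; a limit y of the residuals exposes a
   face of D containing x, the support of x and the active generators; the cone component r of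
   q lies in the cone of that face, satisfies <r, xs - x> >~ alpha and <r, a_s - a_u> <~
   <q, a_s - a_u> on the face, so PdirW(face, r, x) <= <q, s_f - v_f> |xs - x| / alpha. *)

(** * Finite sums and Euclidean geometry *)

Lemma vsum_ext n f g : (forall i, (i < n)%nat -> f i = g i) -> vsum n f = vsum n g.
Proof.
  induction n as [|n IH]; intros Hfg; simpl; auto.
  rewrite IH, Hfg; auto; intros; apply Hfg; lia.
Qed.

Lemma vsum_plus n f g : vsum n (fun i => f i + g i) = vsum n f + vsum n g.
Proof. induction n; simpl; [lra|]. rewrite IHn; lra. Qed.

Lemma vsum_minus n f g : vsum n (fun i => f i - g i) = vsum n f - vsum n g.
Proof. induction n; simpl; [lra|]. rewrite IHn; lra. Qed.

Lemma vsum_scal_l n c f : vsum n (fun i => c * f i) = c * vsum n f.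
Proof. induction n; simpl; [lra|]. rewrite IHn; lra. Qed.

Lemma vsum_scal_r n c f : vsum n (fun i => f i * c) = vsum n f * c.
Proof. induction n; simpl; [lra|]. rewrite IHn; lra. Qed.

Lemma vsum_zero n f : (forall i, (i < n)%nat -> f i = 0) -> vsum n f = 0.
Proof.
  intros Hf. rewrite (vsum_ext n f (fun _ => 0)) by auto. clear Hf.
  induction n; simpl; [reflexivity | rewrite IHn; ring].
Qed.

Lemma vsum_le n f g : (forall i, (i < n)%nat -> f i <= g i) -> vsum n f <= vsum n g.
Proof.
  induction n as [|n IH]; intros Hfg; simpl; [lra|].
  assert (f n <= g n) by (apply Hfg; lia).
  assert (vsum n f <= vsum n g) by (apply IH; intros; apply Hfg; lia).
  lra.
Qed.

Lemma vsum_nonneg n f : (forall i, (i < n)%nat -> 0 <= f i) -> 0 <= vsum n f.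
Proof. intros Hf. rewrite <- (vsum_zero n (fun _ => 0)) by auto. apply vsum_le; auto. Qed.

Lemma vsum_swap n k (F : nat -> nat -> R) :
  vsum n (fun i => vsum k (fun j => F i j)) = vsum k (fun j => vsum n (fun i => F i j)).
Proof.
  induction n; simpl.
  - rewrite vsum_zero; auto.
  - rewrite IHn, <- vsum_plus; auto.
Qed.

Lemma vsum_term_le n f i :
  (forall j, (j < n)%nat -> 0 <= f j) -> (i < n)%nat -> f i <= vsum n f.
Proof.
  induction n as [|n IH]; intros Hf Hi; [lia|]. simpl.
  assert (0 <= f n) by (apply Hf; lia).
  destruct (Nat.eq_dec i n) as [->|Hne].
  - assert (0 <= vsum n f) by (apply vsum_nonneg; intros; apply Hf; lia). lra.
  - assert (f i <= vsum n f) by (apply IH; [intros; apply Hf|]; lia). lra.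
Qed.

Lemma vsum_nonpos_eq0 n f i :
  (forall j, (j < n)%nat -> f j <= 0) -> vsum n f = 0 -> (i < n)%nat -> f i = 0.
Proof.
  intros Hf Hsum Hi.
  assert (Hterm : - f i <= vsum n (fun j => - f j)).
  { apply (vsum_term_le n (fun j => - f j)); auto. intros j Hj. specialize (Hf j Hj). lra. }
  rewrite (vsum_ext n _ (fun j => -1 * f j)), vsum_scal_l in Hterm by (intros; ring).
  specialize (Hf i Hi). lra.
Qed.

Lemma vsum_delta N F i :
  (i < N)%nat -> vsum N (fun k => if Nat.eq_dec k i then F k else 0) = F i.
Proof.
  induction N as [|N IH]; intros Hi; [lia|]. simpl.
  destruct (Nat.eq_dec N i) as [->|Hne].
  - rewrite vsum_zero; [ring|]. intros j Hj. destruct (Nat.eq_dec j i); [lia|auto].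
  - rewrite IH by lia. ring.
Qed.

Lemma dot_sym k u v : dot k u v = dot k v u.
Proof. unfold dot; apply vsum_ext; intros; ring. Qed.

Lemma dot_sub_l k u v w : dot k (vsub u v) w = dot k u w - dot k v w.
Proof. unfold dot, vsub. rewrite <- vsum_minus. apply vsum_ext; intros; ring. Qed.

Lemma dot_sub_r k u v w : dot k w (vsub u v) = dot k w u - dot k w v.
Proof. unfold dot, vsub. rewrite <- vsum_minus. apply vsum_ext; intros; ring. Qed.

Lemma dot_add_l k u v w : dot k (vadd u v) w = dot k u w + dot k v w.
Proof. unfold dot, vadd. rewrite <- vsum_plus. apply vsum_ext; intros; ring. Qed.

Lemma dot_add_r k u v w : dot k w (vadd u v) = dot k w u + dot k w v.
Proof. unfold dot, vadd. rewrite <- vsum_plus. apply vsum_ext; intros; ring. Qed.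

Lemma dot_scale_l k t u w : dot k (vscale t u) w = t * dot k u w.
Proof. unfold dot, vscale. rewrite <- vsum_scal_l. apply vsum_ext; intros; ring. Qed.

Lemma dot_scale_r k t u w : dot k w (vscale t u) = t * dot k w u.
Proof. unfold dot, vscale. rewrite <- vsum_scal_l. apply vsum_ext; intros; ring. Qed.

Lemma dot_self_nonneg k u : 0 <= dot k u u.
Proof. unfold dot; apply vsum_nonneg; intros; nra. Qed.

Lemma dot_veq_r k u u' w : veq k u u' -> dot k w u = dot k w u'.
Proof. intros Huu'; unfold dot; apply vsum_ext; intros; rewrite Huu'; auto. Qed.

Lemma dot_vsub_diag k u w : dot k w (vsub u u) = 0.
Proof. unfold dot, vsub; apply vsum_zero; intros; ring. Qed.

Lemma norm_nonneg k u : 0 <= norm k u.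
Proof. apply sqrt_pos. Qed.

Lemma norm_vsub_diag k u : norm k (vsub u u) = 0.
Proof. unfold norm. rewrite dot_vsub_diag. apply sqrt_0. Qed.

Lemma norm_scale k t u : norm k (vscale t u) = Rabs t * norm k u.
Proof.
  unfold norm. rewrite dot_scale_l, dot_scale_r, <- Rmult_assoc.
  rewrite sqrt_mult_alt by nra. rewrite <- sqrt_Rsqr_abs. reflexivity.
Qed.

Lemma norm_vsub_sym k u v : norm k (vsub u v) = norm k (vsub v u).
Proof.
  replace (vsub u v) with (vscale (-1) (vsub v u)).
  - rewrite norm_scale, Rabs_left by lra. ring.
  - apply functional_extensionality; intro; unfold vscale, vsub; ring.
Qed.

Lemma comp_le_norm k u i : (i < k)%nat -> Rabs (u i) <= norm k u.
Proof.
  intros Hi. rewrite <- sqrt_Rsqr_abs. apply sqrt_le_1_alt. unfold Rsqr, dot.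
  apply (vsum_term_le k (fun i => u i * u i)); auto. intros; nra.
Qed.

Lemma norm_pos_of_nonzero k u : ~ veq k u (fun _ => 0) -> 0 < norm k u.
Proof.
  intros Hu. destruct (Rle_lt_dec (norm k u) 0); auto.
  exfalso. apply Hu. intros i Hi.
  pose proof (comp_le_norm k u i Hi). pose proof (Rabs_pos (u i)).
  destruct (Req_dec (u i) 0) as [|Hne]; auto.
  apply Rabs_no_R0 in Hne. lra.
Qed.

Lemma quadratic_nonneg_discr a b c :
  0 <= c -> (forall t, 0 <= a + 2 * b * t + c * t * t) -> b * b <= a * c.
Proof.
  intros Hc Hq. assert (Ha : 0 <= a) by (specialize (Hq 0); lra).
  destruct (Req_dec c 0) as [->|Hc0].
  - destruct (Req_dec b 0) as [->|Hb]; [lra|].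
    specialize (Hq (- (a + 1) / (2 * b))).
    replace (2 * b * (- (a + 1) / (2 * b))) with (- (a + 1)) in Hq by (field; auto). lra.
  - specialize (Hq (- b / c)).
    replace (a + 2 * b * (- b / c) + c * (- b / c) * (- b / c)) with (a - b * b / c) in Hq
      by (field; auto).
    assert (b * b = b * b / c * c) by (field; auto). nra.
Qed.

Lemma cauchy_schwarz k u v : Rabs (dot k u v) <= norm k u * norm k v.
Proof.
  assert (Hsq : dot k u v * dot k u v <= dot k u u * dot k v v).
  { apply quadratic_nonneg_discr; [apply dot_self_nonneg|]. intro t.
    pose proof (dot_self_nonneg k (vadd u (vscale t v))) as Hsq.
    rewrite dot_add_l, !dot_add_r, !dot_scale_l, !dot_scale_r, (dot_sym k v u) in Hsq. lra. }
  rewrite <- sqrt_Rsqr_abs. unfold norm. rewrite <- sqrt_mult_alt by apply dot_self_nonneg.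
  apply sqrt_le_1_alt. exact Hsq.
Qed.

Lemma dot_le_norm k u v : dot k u v <= norm k u * norm k v.
Proof. eapply Rle_trans; [apply Rle_abs | apply cauchy_schwarz]. Qed.

Lemma Rabs_le_inv a b : Rabs a <= b -> - b <= a <= b.
Proof.
  intros Hab. pose proof (Rle_abs a). pose proof (Rle_abs (- a)). rewrite Rabs_Ropp in *. lra.
Qed.

Lemma le_of_forall_small x y C h0 :
  0 < h0 -> (forall h, 0 < h <= h0 -> x <= y + h * C) -> x <= y.
Proof.
  intros Hh0 Hsmall. destruct (Rle_lt_dec x y) as [|Hlt]; auto. exfalso.
  pose proof (Rabs_pos C).
  set (h := Rmin h0 ((x - y) / (2 * (Rabs C + 1)))).
  assert (Hh : 0 < h) by (apply Rmin_pos; auto; apply Rdiv_lt_0_compat; lra).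
  assert (HhC : h * (Rabs C + 1) <= (x - y) / 2).
  { replace ((x - y) / 2) with ((x - y) / (2 * (Rabs C + 1)) * (Rabs C + 1)) by (field; lra).
    apply Rmult_le_compat_r; [lra | apply Rmin_r]. }
  specialize (Hsmall h (conj Hh (Rmin_l _ _))).
  assert (h * C <= h * Rabs C) by (apply Rmult_le_compat_l; [lra | apply Rle_abs]).
  lra.
Qed.

(** * Sequences and sequential compactness *)

Lemma Un_cv_const c : Un_cv (fun _ => c) c.
Proof. intros eps Heps; exists 0%nat; intros; unfold Rdist; rewrite Rminus_diag, Rabs_R0; lra. Qed.

Lemma Un_cv_vsum N (F : nat -> nat -> R) (L : nat -> R) :
  (forall i, (i < N)%nat -> Un_cv (fun k => F k i) (L i)) ->
  Un_cv (fun k => vsum N (F k)) (vsum N L).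
Proof.
  induction N as [|N IH]; intros HF; simpl; [apply Un_cv_const|].
  apply CV_plus; [apply IH; intros|]; apply HF; lia.
Qed.

Lemma Un_cv_dot k (X : nat -> Vec) y w :
  (forall j, (j < k)%nat -> Un_cv (fun i => X i j) (y j)) ->
  Un_cv (fun i => dot k (X i) w) (dot k y w).
Proof. intros HX. apply Un_cv_vsum. intros j Hj. apply CV_mult; auto. apply Un_cv_const. Qed.

Lemma Un_cv_norm_vsub k (X : nat -> Vec) y :
  (forall j, (j < k)%nat -> Un_cv (fun i => X i j) (y j)) ->
  Un_cv (fun i => norm k (vsub (X i) y)) 0.
Proof.
  intros HX. rewrite <- sqrt_0. apply continuity_seq; [apply continuity_pt_sqrt; lra|].
  rewrite <- (vsum_zero k (fun _ => 0)) by auto. apply Un_cv_vsum. intros j Hj.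
  replace 0 with ((y j - y j) * (y j - y j)) by ring.
  unfold vsub. apply CV_mult; apply CV_minus; auto; apply Un_cv_const.
Qed.

Lemma Un_cv_eventually_lt u l c : Un_cv u l -> l < c -> exists K, forall k, (k >= K)%nat -> u k < c.
Proof.
  intros Hu Hlc. destruct (Hu (c - l)) as [K HK]; [lra|]. exists K. intros k Hk.
  specialize (HK k Hk). unfold Rdist in HK. apply Rabs_def2 in HK. lra.
Qed.

Lemma eventually_forall_fin N (P : nat -> nat -> Prop) :
  (forall i, (i < N)%nat -> exists K, forall k, (k >= K)%nat -> P i k) ->
  exists K, forall i, (i < N)%nat -> forall k, (k >= K)%nat -> P i k.
Proof.
  induction N as [|N IH]; intros HP; [exists 0%nat; intros; lia|].
  destruct IH as [K1 HK1]; [intros; apply HP; lia|].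
  destruct (HP N) as [K2 HK2]; [lia|].
  exists (max K1 K2). intros i Hi k Hk.
  destruct (Nat.eq_dec i N) as [->|]; [apply HK2 | apply HK1]; lia.
Qed.

Definition subseq_index (phi : nat -> nat) : Prop := forall k, (phi k < phi (S k))%nat.

Lemma subseq_index_ge phi : subseq_index phi -> forall k, (k <= phi k)%nat.
Proof. intros Hphi k; induction k; [lia|]. specialize (Hphi k); lia. Qed.

Lemma subseq_index_comp phi psi :
  subseq_index phi -> subseq_index psi -> subseq_index (fun k => phi (psi k)).
Proof.
  intros Hphi Hpsi k.
  assert (Hmono : forall i j, (i <= j)%nat -> (phi i <= phi j)%nat).
  { intros i j; induction 1; auto. specialize (Hphi m); lia. }
  specialize (Hpsi k). specialize (Hphi (psi k)).
  assert (phi (S (psi k)) <= phi (psi (S k)))%nat by (apply Hmono; lia). lia.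
Qed.

Lemma Un_cv_subseq u l phi : subseq_index phi -> Un_cv u l -> Un_cv (fun k => u (phi k)) l.
Proof.
  intros Hphi Hu eps Heps. destruct (Hu eps Heps) as [N HN]. exists N. intros k Hk.
  apply HN. pose proof (subseq_index_ge phi Hphi k). lia.
Qed.

Fixpoint subseq_of_picks (pick : nat -> nat -> nat) (k : nat) : nat :=
  match k with
  | O => pick O O
  | S k' => pick (S (subseq_of_picks pick k')) (S k')
  end.

Lemma bounded_seq_cv_subseq (u : nat -> R) C :
  (forall k, Rabs (u k) <= C) ->
  exists phi, subseq_index phi /\ exists l, Un_cv (fun k => u (phi k)) l.
Proof.
  intros Hu.
  destruct (Bolzano_Weierstrass u (fun c => - C <= c <= C) (compact_P3 _ _)) as [l Hl].
  { intros k. apply Rabs_le_inv, Hu. }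
  assert (Hpick : forall N k, exists p, (N <= p)%nat /\ Rabs (u p - l) < / (INR k + 1)).
  { intros N k. destruct (Hl (disc l (RinvN k)) N) as [p Hp]; [|exists p; exact Hp].
    exists (RinvN k). intros y Hy; exact Hy. }
  destruct (choice (fun Nk p => (fst Nk <= p)%nat /\ Rabs (u p - l) < / (INR (snd Nk) + 1)))
    as [pick Hp]; [intros [N k]; apply Hpick|].
  set (phi := subseq_of_picks (fun N k => pick (N, k))).
  exists phi. split.
  - intro k. change (phi k < pick (S (phi k), S k))%nat.
    destruct (Hp (S (phi k), S k)). simpl in *. lia.
  - exists l. intros eps Heps. destruct (archimed_cor1 eps Heps) as [K [HK HK0]].
    exists K. intros k Hk. unfold Rdist.
    assert (Hk' : Rabs (u (phi k) - l) < / (INR k + 1)) by (destruct k; apply Hp).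
    assert (/ (INR k + 1) <= / INR K).
    { apply Rinv_le_contravar; [apply lt_0_INR; lia|]. pose proof (le_INR K k Hk). lra. }
    lra.
Qed.

Lemma bounded_vec_cv_subseq N (X : nat -> Vec) C :
  (forall k i, (i < N)%nat -> Rabs (X k i) <= C) ->
  exists phi, subseq_index phi /\
    exists y : Vec, forall i, (i < N)%nat -> Un_cv (fun k => X (phi k) i) (y i).
Proof.
  induction N as [|N IH]; intros HX.
  - exists (fun k => k). split; [intro; lia|]. exists (fun _ => 0). intros; lia.
  - destruct IH as [phi1 [Hphi1 [y Hy]]]; [intros; apply HX; lia|].
    destruct (bounded_seq_cv_subseq (fun k => X (phi1 k) N) C) as [phi2 [Hphi2 [l Hl]]];
      [intros; apply HX; lia|].
    exists (fun k => phi1 (phi2 k)). split; [apply subseq_index_comp; auto|].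
    exists (fun i => if Nat.eq_dec i N then l else y i). intros i Hi.
    destruct (Nat.eq_dec i N) as [->|]; auto.
    apply (Un_cv_subseq (fun k => X (phi1 k) i)); auto. apply Hy; lia.
Qed.

Lemma seq_compact_min N (C : Vec -> Prop) (h : Vec -> R) Bd lb :
  (forall z, C z -> forall i, (i < N)%nat -> Rabs (z i) <= Bd) ->
  (forall (X : nat -> Vec) y, (forall k, C (X k)) ->
     (forall i, (i < N)%nat -> Un_cv (fun k => X k i) (y i)) ->
     C y /\ Un_cv (fun k => h (X k)) (h y)) ->
  (exists z, C z) -> (forall z, C z -> lb <= h z) ->
  exists y, C y /\ forall z, C z -> h y <= h z.
Proof.
  intros Hbd Hclosed [z0 Hz0] Hlb.
  destruct (completeness (fun r => exists z, C z /\ r = - h z)) as [l [Hl1 Hl2]].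
  { exists (- lb). intros r [z [Hz ->]]. specialize (Hlb z Hz). lra. }
  { exists (- h z0); eauto. }
  assert (Happrox : forall k, exists z, C z /\ h z < - l + / (INR k + 1)).
  { intros k. apply NNPP; intros Hno. pose proof (RinvN_pos k) as Hpos.
    assert (l <= l - / (INR k + 1)); [|lra].
    apply Hl2. intros r [z [Hz ->]].
    destruct (Rle_lt_dec (- h z) (l - / (INR k + 1))); auto.
    exfalso; apply Hno. exists z; split; auto; lra. }
  apply choice in Happrox. destruct Happrox as [X HX].
  destruct (bounded_vec_cv_subseq N X Bd) as [phi [Hphi [y Hy]]];
    [intros; apply (Hbd (X k)); auto; apply HX|].
  destruct (Hclosed (fun k => X (phi k)) y) as [Cy Hhy]; [intros; apply HX | auto |].
  exists y; split; auto. intros z Hz.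
  assert (- h z <= l) by (apply Hl1; eauto).
  assert (h y <= - l + 0); [|lra].
  apply (@Rle_cv_lim (fun k => h (X (phi k))) (fun k => - l + / (INR (phi k) + 1))); auto.
  - intros k. left. apply (HX (phi k)).
  - apply CV_plus; [apply Un_cv_const|].
    apply (Un_cv_subseq (fun k => RinvN k)); auto. apply RinvN_cv.
Qed.

(** * Frechet gradients *)

Lemma vsub_vadd_l y w : vsub (vadd y w) y = w.
Proof. apply functional_extensionality; intro; unfold vsub, vadd; ring. Qed.

Lemma has_grad_dir k h gr y w eps :
  has_grad k h gr y -> 0 < eps -> exists t0, 0 < t0 /\ forall t, 0 < t <= t0 ->
    Rabs (h (vadd y (vscale t w)) - h y - t * dot k gr w) <= t * eps.
Proof.
  intros Hgr Heps. set (nw := norm k w). assert (Hnw : 0 <= nw) by apply norm_nonneg.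
  destruct (Hgr (eps / (nw + 1))) as [dl [Hdl Hd]]; [apply Rdiv_lt_0_compat; lra|].
  exists (dl / (2 * (nw + 1))). split; [apply Rdiv_lt_0_compat; lra|]. intros t Ht.
  assert (Hstep : norm k (vsub (vadd y (vscale t w)) y) = t * nw)
    by (rewrite vsub_vadd_l, norm_scale, Rabs_right; [reflexivity | lra]).
  assert (Htnw : t * nw < dl).
  { assert (t * (nw + 1) <= dl / 2); [|nra].
    replace (dl / 2) with (dl / (2 * (nw + 1)) * (nw + 1)) by (field; lra).
    apply Rmult_le_compat_r; lra. }
  specialize (Hd (vadd y (vscale t w))). rewrite Hstep, vsub_vadd_l, dot_scale_r in Hd.
  eapply Rle_trans; [apply Hd; lra|].
  replace (eps / (nw + 1) * (t * nw)) with (t * eps * (nw / (nw + 1))) by (field; lra).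
  assert (Hratio : nw / (nw + 1) <= 1) by (apply Rmult_le_reg_r with (nw + 1); [lra|];
    replace (nw / (nw + 1) * (nw + 1)) with nw by (field; lra); lra).
  assert (0 <= t * eps) by nra.
  apply Rmult_le_compat_l with (r := t * eps) in Hratio; lra.
Qed.

Lemma grad_dir_ub k h gr y w c K :
  has_grad k h gr y ->
  (forall t, 0 < t <= 1 -> h (vadd y (vscale t w)) - h y <= t * c + t * t * K) ->
  dot k gr w <= c.
Proof.
  intros Hgr Hinc. apply (le_of_forall_small _ _ 1 1); [lra|]. intros eps Heps.
  destruct (has_grad_dir k h gr y w eps Hgr (proj1 Heps)) as [t0 [Ht0 Hdir]].
  apply (le_of_forall_small _ _ K (Rmin t0 1)); [apply Rmin_pos; lra|]. intros t Ht.
  pose proof (Rmin_l t0 1). pose proof (Rmin_r t0 1).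
  specialize (Hinc t ltac:(lra)). specialize (Hdir t ltac:(lra)). apply Rabs_le_inv in Hdir.
  apply Rmult_le_reg_l with t; lra.
Qed.

Lemma grad_dir_lb k h gr y w c K :
  has_grad k h gr y ->
  (forall t, 0 < t <= 1 -> t * c - t * t * K <= h (vadd y (vscale t w)) - h y) ->
  c <= dot k gr w.
Proof.
  intros Hgr Hinc. apply (le_of_forall_small _ _ 1 1); [lra|]. intros eps Heps.
  destruct (has_grad_dir k h gr y w eps Hgr (proj1 Heps)) as [t0 [Ht0 Hdir]].
  apply (le_of_forall_small _ _ K (Rmin t0 1)); [apply Rmin_pos; lra|]. intros t Ht.
  pose proof (Rmin_l t0 1). pose proof (Rmin_r t0 1).
  specialize (Hinc t ltac:(lra)). specialize (Hdir t ltac:(lra)). apply Rabs_le_inv in Hdir.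
  apply Rmult_le_reg_l with t; lra.
Qed.

Lemma has_grad_veq k h gr y z : has_grad k h gr y -> veq k z y -> h z = h y.
Proof.
  intros Hgr Hzy. destruct (Hgr 1) as [dl [Hdl Hd]]; [lra|].
  assert (Hdot : forall w, dot k w (vsub z y) = 0)
    by (intros; unfold dot, vsub; apply vsum_zero; intros; rewrite Hzy by auto; ring).
  assert (Hn : norm k (vsub z y) = 0) by (unfold norm; rewrite Hdot; apply sqrt_0).
  specialize (Hd z ltac:(lra)). rewrite Hn, Hdot in Hd. apply Rabs_le_inv in Hd. lra.
Qed.

Lemma Un_cv_of_has_grad k h gr y (X : nat -> Vec) :
  has_grad k h gr y -> Un_cv (fun i => norm k (vsub (X i) y)) 0 ->
  Un_cv (fun i => h (X i)) (h y).
Proof.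
  intros Hgr HX eps Heps. destruct (Hgr 1) as [dl [Hdl Hd]]; [lra|].
  set (C0 := norm k gr + 1).
  assert (HC0 : 0 < C0) by (pose proof (norm_nonneg k gr); unfold C0; lra).
  destruct (HX (Rmin dl (eps / C0))) as [N HN];
    [apply Rmin_pos; auto; apply Rdiv_lt_0_compat; lra|].
  exists N. intros i Hi. specialize (HN i Hi). unfold Rdist in *.
  rewrite Rminus_0_r, Rabs_right in HN by (apply Rle_ge, norm_nonneg).
  pose proof (Rmin_l dl (eps / C0)). pose proof (Rmin_r dl (eps / C0)).
  assert (Hlip : Rabs (h (X i) - h y) <= C0 * norm k (vsub (X i) y)).
  { specialize (Hd (X i) ltac:(lra)). pose proof (cauchy_schwarz k gr (vsub (X i) y)).
    replace (h (X i) - h y)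
      with (h (X i) - h y - dot k gr (vsub (X i) y) + dot k gr (vsub (X i) y)) by ring.
    eapply Rle_trans; [apply Rabs_triang|]. unfold C0. lra. }
  assert (C0 * norm k (vsub (X i) y) < eps).
  { replace eps with (C0 * (eps / C0)) by (field; lra). apply Rmult_lt_compat_l; lra. }
  lra.
Qed.

(** * Convex hulls and proper convex combinations *)

Definition comb (n : nat) (a : nat -> Vec) (lam : nat -> R) : Vec :=
  fun k => vsum n (fun i => lam i * a i k).

Lemma dot_comb d n a lam w : dot d w (comb n a lam) = vsum n (fun i => lam i * dot d w (a i)).
Proof.
  unfold dot, comb.
  transitivity (vsum d (fun j => vsum n (fun i => lam i * (w j * a i j)))).
  - apply vsum_ext; intros. rewrite <- vsum_scal_l. apply vsum_ext; intros; ring.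
  - rewrite <- vsum_swap. apply vsum_ext; intros. apply vsum_scal_l.
Qed.

Lemma vsum_convex_le n lam F c :
  (forall i, (i < n)%nat -> 0 <= lam i) -> vsum n lam = 1 ->
  (forall i, (i < n)%nat -> lam i <> 0 -> F i <= c) -> vsum n (fun i => lam i * F i) <= c.
Proof.
  intros Hl Hsum HF. replace c with (vsum n (fun i => lam i * c)) by (rewrite vsum_scal_r, Hsum; ring).
  apply vsum_le. intros i Hi. destruct (Req_dec (lam i) 0) as [->|Hne]; [lra|].
  specialize (Hl i Hi). specialize (HF i Hi Hne). nra.
Qed.

Lemma conv_dot_le d n a x w c :
  in_conv d n a x -> (forall i, (i < n)%nat -> dot d w (a i) <= c) -> dot d w x <= c.
Proof.
  intros [lam [Hl [Hsum Hx]]] Hc. rewrite (dot_veq_r d x (comb n a lam)) by auto.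
  rewrite dot_comb. apply vsum_convex_le; auto.
Qed.

Lemma conv_dot_ge d n a x w c :
  in_conv d n a x -> (forall i, (i < n)%nat -> c <= dot d w (a i)) -> c <= dot d w x.
Proof.
  intros Hx Hc. assert (dot d (vscale (-1) w) x <= - c); [|rewrite dot_scale_l in *; lra].
  apply (conv_dot_le d n a); auto. intros i Hi. rewrite dot_scale_l. specialize (Hc i Hi). lra.
Qed.

Lemma conv_dot_sub_le d n a z x w c :
  in_conv d n a z -> (forall i, (i < n)%nat -> dot d w (vsub (a i) x) <= c) ->
  dot d w (vsub z x) <= c.
Proof.
  intros Hz Hc. rewrite dot_sub_r. assert (dot d w z <= dot d w x + c); [|lra].
  apply (conv_dot_le d n a); auto. intros i Hi. specialize (Hc i Hi). rewrite dot_sub_r in Hc. lra.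
Qed.

Lemma conv_convex d n a x y t :
  in_conv d n a x -> in_conv d n a y -> 0 <= t <= 1 ->
  in_conv d n a (vadd (vscale t x) (vscale (1 - t) y)).
Proof.
  intros [l1 [Hl1 [Hs1 Hx]]] [l2 [Hl2 [Hs2 Hy]]] Ht.
  exists (fun i => t * l1 i + (1 - t) * l2 i). repeat split.
  - intros i Hi. specialize (Hl1 i Hi). specialize (Hl2 i Hi). nra.
  - rewrite vsum_plus, !vsum_scal_l, Hs1, Hs2; ring.
  - intros k Hk. unfold vadd, vscale. rewrite Hx, Hy by auto.
    rewrite <- !vsum_scal_l, <- vsum_plus. apply vsum_ext; intros; ring.
Qed.

Lemma conv_vertex d n a i : (i < n)%nat -> in_conv d n a (a i).
Proof.
  intros Hi. exists (fun j => if Nat.eq_dec j i then 1 else 0). repeat split.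
  - intros j _. destruct (Nat.eq_dec j i); lra.
  - exact (vsum_delta n (fun _ => 1) i Hi).
  - intros k _. rewrite <- (vsum_delta n (fun j => a j k) i Hi) at 1.
    apply vsum_ext. intros j _. destruct (Nat.eq_dec j i); ring.
Qed.

Lemma Sx_nonempty d n a Bs x S : in_Sx d n a Bs x S -> exists v, S v.
Proof.
  intros [HS [lam [Hpos [Hzero [Hsum Hx]]]]]. apply NNPP; intro Hno.
  rewrite vsum_zero in Hsum; [lra|]. intros i Hi. apply Hzero; auto. intro; apply Hno; eauto.
Qed.

Lemma Sx_dot_le d n a Bs x S w c :
  in_Sx d n a Bs x S -> (forall u, S u -> dot d w (a u) <= c) -> dot d w x <= c.
Proof.
  intros [HS [lam [Hpos [Hzero [Hsum Hx]]]]] Hc.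
  rewrite (dot_veq_r d x (comb n a lam)) by auto. rewrite dot_comb.
  apply vsum_convex_le; auto.
  - intros i Hi. destruct (classic (S i)); [left; auto | rewrite Hzero; auto; lra].
  - intros i Hi Hne. apply Hc. apply NNPP; intro HSi. apply Hne, Hzero; auto.
Qed.

Lemma Sx_support_eq d n a Bs x S w u :
  in_Sx d n a Bs x S -> (forall i, (i < n)%nat -> dot d w (a i) <= dot d w x) -> S u ->
  dot d w (a u) = dot d w x.
Proof.
  intros [HS [lam [Hpos [Hzero [Hsum Hx]]]]] Hle Hu.
  destruct (HS u Hu) as [Hun _].
  assert (Hnn : forall i, (i < n)%nat -> 0 <= lam i)
    by (intros i Hi; destruct (classic (S i)); [left; auto | rewrite Hzero; auto; lra]).
  assert (Hgap : vsum n (fun i => lam i * (dot d w (a i) - dot d w x)) = 0).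
  { rewrite (vsum_ext n _ (fun i => lam i * dot d w (a i) - lam i * dot d w x)) by (intros; ring).
    rewrite vsum_minus, vsum_scal_r, Hsum, <- dot_comb, <- (dot_veq_r d x (comb n a lam)) by auto.
    ring. }
  assert (Hterm : lam u * (dot d w (a u) - dot d w x) = 0).
  { apply (vsum_nonpos_eq0 n (fun i => lam i * (dot d w (a i) - dot d w x))); auto.
    intros j Hj. specialize (Hle j Hj). specialize (Hnn j Hj). nra. }
  specialize (Hpos u Hun Hu). apply Rmult_integral in Hterm. destruct Hterm; lra.
Qed.

(** * Regularized projection onto a cone *)

Section ConeResidual.
Variables (d n : nat) (a : nat -> Vec) (x q : Vec).

Definition cone_comb (t : Vec) : Vec := fun j => vsum n (fun i => t i * (a i j - x j)).
Definition cone_residual (t : Vec) : Vec := vsub q (cone_comb t).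
(* The penalty [dl * sum t] keeps minimizers bounded, hence existent, without spoiling the
   first-order conditions. *)
Definition reg_obj (dl : R) (t : Vec) : R :=
  dot d (cone_residual t) (cone_residual t) + dl * vsum n t.
Definition bump (t : Vec) (i : nat) (h : R) : Vec :=
  fun k => t k + (if Nat.eq_dec k i then h else 0).

Lemma reg_obj_bump dl t i h : (i < n)%nat ->
  reg_obj dl (bump t i h) = reg_obj dl t - 2 * h * dot d (cone_residual t) (vsub (a i) x)
    + h * h * dot d (vsub (a i) x) (vsub (a i) x) + dl * h.
Proof.
  intros Hi. unfold reg_obj.
  assert (Hres : cone_residual (bump t i h) = vsub (cone_residual t) (vscale h (vsub (a i) x))).
  { apply functional_extensionality; intro j. unfold cone_residual, cone_comb, vsub, vscale, bump.
    rewrite (vsum_ext n _ (fun k => t k * (a k j - x j)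
               + (if Nat.eq_dec k i then h * (a k j - x j) else 0)))
      by (intros k _; destruct (Nat.eq_dec k i); ring).
    rewrite vsum_plus, (vsum_delta n (fun k => h * (a k j - x j))) by auto. ring. }
  assert (Hsum : vsum n (bump t i h) = vsum n t + h)
    by (unfold bump; rewrite vsum_plus, (vsum_delta n (fun _ => h)) by auto; reflexivity).
  rewrite Hres, Hsum. set (r := cone_residual t). set (e := vsub (a i) x).
  rewrite !dot_sub_l, !dot_sub_r, !dot_scale_l, !dot_scale_r, (dot_sym d e r). ring.
Qed.

Lemma reg_obj_stationary dl t i sg h0 : (i < n)%nat -> 0 < h0 ->
  (forall h, 0 < h <= h0 -> reg_obj dl t <= reg_obj dl (bump t i (sg * h))) ->
  0 <= sg * (dl - 2 * dot d (cone_residual t) (vsub (a i) x)).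
Proof.
  intros Hi Hh0 Hmin. set (G2 := dot d (vsub (a i) x) (vsub (a i) x)).
  apply (le_of_forall_small _ _ (sg * sg * G2) h0 Hh0). intros h Hh.
  specialize (Hmin h Hh). rewrite reg_obj_bump in Hmin by auto. fold G2 in Hmin.
  apply Rmult_le_reg_l with h; [lra|]. nra.
Qed.

Definition in_box (R0 : R) (t : Vec) : Prop := forall i, (i < n)%nat -> 0 <= t i <= R0.

Lemma reg_obj_box_min dl R0 : 0 <= dl -> 0 <= R0 ->
  exists t, in_box R0 t /\ forall z, in_box R0 z -> reg_obj dl t <= reg_obj dl z.
Proof.
  intros Hdl HR0. apply (seq_compact_min n (in_box R0) (reg_obj dl) R0 0).
  - intros z Hz i Hi. specialize (Hz i Hi). rewrite Rabs_right; lra.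
  - intros X y HX Hcv. split.
    + intros i Hi. split.
      * apply (@Rle_cv_lim (fun _ => 0) (fun k => X k i)); auto; [|apply Un_cv_const].
        intros; apply HX; auto.
      * apply (@Rle_cv_lim (fun k => X k i) (fun _ => R0)); auto; [|apply Un_cv_const].
        intros; apply HX; auto.
    + assert (Hres : forall j, (j < d)%nat ->
                Un_cv (fun k => cone_residual (X k) j) (cone_residual y j)).
      { intros j Hj. apply CV_minus; [apply Un_cv_const|]. apply Un_cv_vsum. intros i Hi.
        apply CV_mult; auto. apply Un_cv_const. }
      apply CV_plus; [apply Un_cv_vsum; intros; apply CV_mult; auto|].
      apply CV_mult; [apply Un_cv_const | apply Un_cv_vsum; auto].
  - exists (fun _ => 0). intros i Hi. simpl. lra.
  - intros z Hz. apply Rplus_le_le_0_compat; [apply dot_self_nonneg|].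
    apply Rmult_le_pos; [lra | apply vsum_nonneg; intros; apply Hz; auto].
Qed.

Lemma reg_kkt dl : 0 < dl -> exists t,
  (forall i, (i < n)%nat -> 0 <= t i) /\
  (forall i, (i < n)%nat -> dot d (cone_residual t) (vsub (a i) x) <= dl / 2) /\
  (forall i, (i < n)%nat -> 0 < t i -> dot d (cone_residual t) (vsub (a i) x) = dl / 2) /\
  dot d (cone_residual t) (cone_residual t) <= dot d q q.
Proof.
  intros Hdl. set (R0 := (dot d q q + 1) / dl).
  assert (HR0 : 0 < R0) by (apply Rdiv_lt_0_compat; [pose proof (dot_self_nonneg d q)|]; lra).
  destruct (reg_obj_box_min dl R0) as [t [Ht Hmin]]; [lra | lra |].
  assert (Hval : reg_obj dl t <= dot d q q).
  { specialize (Hmin (fun _ => 0) ltac:(intros i Hi; simpl; lra)).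
    assert (Hres0 : cone_residual (fun _ => 0) = q).
    { apply functional_extensionality; intro j. unfold cone_residual, cone_comb, vsub.
      rewrite vsum_zero by (intros; ring). ring. }
    unfold reg_obj at 2 in Hmin. rewrite Hres0, vsum_zero in Hmin by auto. lra. }
  assert (Hsum : 0 <= vsum n t) by (apply vsum_nonneg; intros; apply Ht; auto).
  assert (Hlt : forall i, (i < n)%nat -> t i < R0).
  { intros i Hi. assert (t i <= vsum n t) by (apply vsum_term_le; auto; intros; apply Ht; auto).
    pose proof (dot_self_nonneg d (cone_residual t)). unfold reg_obj in Hval.
    assert (dl * R0 = dot d q q + 1) by (unfold R0; field; lra). nra. }
  assert (Hup : forall i, (i < n)%nat -> dot d (cone_residual t) (vsub (a i) x) <= dl / 2).
  { intros i Hi. specialize (Hlt i Hi).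
    assert (0 <= 1 * (dl - 2 * dot d (cone_residual t) (vsub (a i) x))); [|lra].
    apply (reg_obj_stationary dl t i 1 (R0 - t i)); auto; [lra|].
    intros h Hh. apply Hmin. intros k Hk. specialize (Ht k Hk). unfold bump.
    destruct (Nat.eq_dec k i) as [->|]; lra. }
  exists t. repeat split; try (intros; apply Ht; auto); auto.
  - intros i Hi Hti. specialize (Hup i Hi).
    assert (0 <= -1 * (dl - 2 * dot d (cone_residual t) (vsub (a i) x))); [|lra].
    apply (reg_obj_stationary dl t i (-1) (t i)); auto.
    intros h Hh. apply Hmin. intros k Hk. specialize (Ht k Hk). specialize (Hlt k Hk).
    unfold bump. destruct (Nat.eq_dec k i) as [->|]; lra.
  - unfold reg_obj in Hval. assert (0 <= dl * vsum n t) by (apply Rmult_le_pos; lra). lra.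
Qed.

(* Letting the regularization vanish along a convergent subsequence of residuals: the limit y
   supports conv(a) at x, and the active generators of t lie on that supporting face. *)
Lemma cone_residual_limit eta : 0 < eta -> exists y t dl,
  (0 < dl <= eta) /\
  (forall i, (i < n)%nat -> 0 <= t i) /\
  (forall i, (i < n)%nat -> dot d (cone_residual t) (vsub (a i) x) <= dl / 2) /\
  (forall i, (i < n)%nat -> dot d y (vsub (a i) x) <= 0) /\
  (forall i, (i < n)%nat -> 0 < t i -> dot d y (vsub (a i) x) = 0) /\
  (forall i, (i < n)%nat -> Rabs (dot d (vsub (cone_residual t) y) (a i)) <= eta).
Proof.
  intros Heta.
  destruct (choice _ (fun k => reg_kkt (RinvN k) (RinvN_pos k))) as [T HT].
  set (P := fun k => cone_residual (T k)).
  destruct (bounded_vec_cv_subseq d P (norm d q)) as [phi [Hphi [y Hy]]].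
  { intros k j Hj. eapply Rle_trans; [apply (comp_le_norm d); auto|].
    apply sqrt_le_1_alt, (HT k). }
  assert (Hdot : forall w, Un_cv (fun k => dot d (P (phi k)) w) (dot d y w))
    by (intros; apply Un_cv_dot; auto).
  assert (Hdl : Un_cv (fun k => RinvN (phi k) / 2) 0).
  { rewrite <- (Rmult_0_l (/ 2)). apply CV_mult; [|apply Un_cv_const].
    apply (Un_cv_subseq (fun k => RinvN k)); auto. apply RinvN_cv. }
  assert (Hsupp : forall i, (i < n)%nat -> dot d y (vsub (a i) x) <= 0).
  { intros i Hi. apply (@Rle_cv_lim (fun k => dot d (P (phi k)) (vsub (a i) x))
                                    (fun k => RinvN (phi k) / 2)); auto.
    intros k. apply HT; auto. }
  assert (Hactive : forall i, (i < n)%nat -> exists K, forall k, (k >= K)%nat ->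
            (0 < T (phi k) i -> dot d y (vsub (a i) x) = 0) /\
            Rabs (dot d (vsub (P (phi k)) y) (a i)) <= eta).
  { intros i Hi. destruct (Hdot (a i) eta Heta) as [K1 HK1].
    destruct (Req_dec (dot d y (vsub (a i) x)) 0) as [Hzero|Hneg].
    - exists K1. intros k Hk. split; [auto|]. rewrite dot_sub_l. left. apply HK1; auto.
    - destruct (Un_cv_eventually_lt _ _ 0 (Hdot (vsub (a i) x))) as [K2 HK2];
        [specialize (Hsupp i Hi); lra|].
      exists (max K1 K2). intros k Hk. split.
      + intros Hpos. destruct (HT (phi k)) as [_ [_ [Heq _]]].
        specialize (Heq i Hi Hpos). specialize (HK2 k ltac:(lia)).
        pose proof (cond_pos (RinvN (phi k))). unfold P in HK2. lra.
      + rewrite dot_sub_l. left. apply HK1; lia. }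
  destruct (eventually_forall_fin n _ Hactive) as [K1 HK1].
  destruct (Un_cv_eventually_lt _ _ (eta / 2) Hdl ltac:(lra)) as [K2 HK2].
  set (k := max K1 K2). specialize (HK2 k ltac:(lia)).
  exists y, (T (phi k)), (RinvN (phi k)).
  destruct (HT (phi k)) as [Ht0 [Hup _]]. pose proof (cond_pos (RinvN (phi k))).
  refine (conj (conj _ _) (conj Ht0 (conj Hup (conj Hsupp (conj _ _))))); try lra.
  - intros i Hi. apply (HK1 i Hi k). lia.
  - intros i Hi. apply (HK1 i Hi k). lia.
Qed.

End ConeResidual.

(** * Pyramidal width *)

Lemma finite_max (l : list R) (W : R -> Prop) :
  (forall w, W w -> In w l) -> (exists w, W w) -> exists w, W w /\ forall y, W y -> y <= w.
Proof.
  revert W. induction l as [|h l IH]; intros W Hl [w0 Hw0]; [destruct (Hl w0 Hw0)|].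
  destruct (classic (exists w, W w /\ In w l)) as [Htail|Hnotail].
  - destruct (IH (fun w => W w /\ In w l)) as [w [[Hw _] Hmax]]; [tauto | auto |].
    destruct (classic (W h /\ w < h)) as [[Hh Hlt]|Hnot].
    + exists h. split; auto. intros y Hy. destruct (Hl y Hy) as [->|Hin]; [lra|].
      specialize (Hmax y (conj Hy Hin)). lra.
    + exists w. split; auto. intros y Hy. destruct (Hl y Hy) as [->|Hin]; [|apply Hmax; auto].
      apply Rnot_lt_le. intro. apply Hnot; auto.
  - assert (Hh : W h) by (destruct (Hl w0 Hw0) as [->|]; [auto | exfalso; eauto]).
    exists h. split; auto. intros y Hy.
    destruct (Hl y Hy) as [->|]; [lra | exfalso; eauto].
Qed.

Lemma finite_min (l : list R) (W : R -> Prop) :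
  (forall w, W w -> In w l) -> (exists w, W w) -> exists w, W w /\ forall y, W y -> w <= y.
Proof.
  intros Hl [w0 Hw0].
  destruct (finite_max (map Ropp l) (fun w => W (- w))) as [w [Hw Hmax]].
  - intros w Hw. replace w with (- - w) by ring. apply in_map; auto.
  - exists (- w0). rewrite Ropp_involutive; auto.
  - exists (- w). split; auto. intros y Hy.
    assert (- y <= w) by (apply Hmax; rewrite Ropp_involutive; auto). lra.
Qed.

Definition pair_values (n : nat) (h : nat -> nat -> R) : list R :=
  flat_map (fun i => map (h i) (seq 0 n)) (seq 0 n).

Lemma in_pair_values n h i j : (i < n)%nat -> (j < n)%nat -> In (h i j) (pair_values n h).
Proof.
  intros Hi Hj. apply in_flat_map. exists i. split; [apply in_seq; lia|].
  apply in_map, in_seq; lia.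
Qed.

Lemma PdirW_nonneg d n a Bs r x w : PdirW_is d n a Bs r x w -> 0 <= w.
Proof.
  intros [[S [HS [_ Hle]]] _]. destruct (Sx_nonempty _ _ _ _ _ _ HS) as [v Hv].
  destruct (proj1 HS v Hv) as [Hvn HBv]. eapply Rle_trans; [|apply Hle; exists v, v; eauto].
  rewrite dot_vsub_diag. lra.
Qed.

Lemma PWidth_set_nonneg d n a w : PWidth_set d n a w -> 0 <= w.
Proof. intros [K [_ [_ [x [r [_ [_ [_ Hw]]]]]]]]. eapply PdirW_nonneg, Hw. Qed.

Lemma PdirW_exists d n a (Bs : nat -> Prop) r x S0 B0 :
  in_Sx d n a Bs x S0 ->
  (forall s v, (s < n)%nat -> Bs s -> S0 v ->
     dot d (vscale (/ norm d r) r) (vsub (a s) (a v)) <= B0) ->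
  exists w, PdirW_is d n a Bs r x w /\ w <= B0.
Proof.
  intros HS0 HB.
  set (h := fun s v => dot d (vscale (/ norm d r) r) (vsub (a s) (a v))).
  set (vals := fun S u => exists s v, (s < n)%nat /\ Bs s /\ S v /\ u = h s v).
  assert (Hvals : forall S, in_Sx d n a Bs x S -> forall u, vals S u -> In u (pair_values n h)).
  { intros S HS u [s [v [Hs [_ [Hv ->]]]]]. apply in_pair_values; auto. apply (proj1 HS v Hv). }
  assert (Hmax : forall S, in_Sx d n a Bs x S -> exists w, is_max (vals S) w).
  { intros S HS. destruct (Sx_nonempty _ _ _ _ _ _ HS) as [v Hv]. destruct (proj1 HS v Hv).
    apply (finite_max (pair_values n h)); [apply Hvals; auto|]. exists (h v v), v, v; auto. }
  destruct (finite_min (pair_values n h) (fun w => exists S, in_Sx d n a Bs x S /\ is_max (vals S) w))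
    as [w [[S [HS HmaxS]] Hmin]].
  - intros w [S [HS [Hw _]]]. apply (Hvals S HS w Hw).
  - destruct (Hmax S0 HS0) as [w Hw]. eauto.
  - exists w. split; [split; [exists S; auto | exact Hmin]|].
    destruct (Hmax S0 HS0) as [w0 [[s [v [Hs [HBs [Hv ->]]]]] Hw0]].
    eapply Rle_trans; [apply Hmin; exists S0; split; [auto | split; [exists s, v|]]; eauto|].
    apply HB; auto.
Qed.

Definition argmax_face (d n : nat) (a : nat -> Vec) (y : Vec) : Vec -> Prop :=
  fun z => in_conv d n a z /\ forall z', in_conv d n a z' -> dot d y z' <= dot d y z.

Lemma argmax_face_is_face d n a y : is_face d (in_conv d n a) (argmax_face d n a y).
Proof. exists y. intros z. unfold argmax_face. tauto. Qed.

Lemma argmax_face_of_vertices d n a y x :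
  in_conv d n a x -> (forall i, (i < n)%nat -> dot d y (vsub (a i) x) <= 0) ->
  argmax_face d n a y x.
Proof.
  intros Hx Hle. split; auto. intros z Hz. apply (conv_dot_le d n a); auto.
  intros i Hi. specialize (Hle i Hi). rewrite dot_sub_r in Hle. lra.
Qed.

Lemma argmax_face_vertex d n a y x i :
  argmax_face d n a y x -> (i < n)%nat -> dot d y (vsub (a i) x) = 0 -> argmax_face d n a y (a i).
Proof.
  intros [Hx Hmax] Hi Hzero. split; [apply conv_vertex; auto|].
  intros z Hz. specialize (Hmax z Hz). rewrite dot_sub_r in Hzero. lra.
Qed.

Lemma argmax_face_Sx d n a Bs y x S u :
  argmax_face d n a y x -> in_Sx d n a Bs x S -> S u -> argmax_face d n a y (a u).
Proof.
  intros Hface HS Hu. destruct (proj1 HS u Hu) as [Hun _].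
  apply (argmax_face_vertex d n a y x); auto.
  rewrite dot_sub_r, (Sx_support_eq d n a Bs x S y u); auto; [ring|].
  intros i Hi. apply (proj2 Hface), conv_vertex; auto.
Qed.

Lemma cone_comb_in_cone d n a x t (K : Vec -> Prop) :
  K x -> (forall i, (i < n)%nat -> 0 <= t i) -> (forall i, (i < n)%nat -> 0 < t i -> K (a i)) ->
  in_cone d K x (cone_comb n a x t).
Proof.
  intros Kx Ht0 Hact. exists n, t, (fun i => if Rlt_dec 0 (t i) then a i else x). split.
  - intros j Hj. split; [apply Ht0; auto|]. destruct (Rlt_dec 0 (t j)); auto.
  - intros k Hk. apply vsum_ext. intros i Hi. destruct (Rlt_dec 0 (t i)); auto.
    replace (t i) with 0 by (specialize (Ht0 i Hi); lra). ring.
Qed.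

Section PyramidalBound.
Variables (d n : nat) (a : nat -> Vec) (x xs q : Vec) (S0 : nat -> Prop) (den : R).
Hypothesis Hx : in_conv d n a x.
Hypothesis Hxs : in_conv d n a xs.
Hypothesis HS0 : in_Sx d n a (fun i => (i < n)%nat) x S0.
Hypothesis Hden : forall s u, (s < n)%nat -> S0 u -> dot d q (vsub (a s) (a u)) <= den.

Lemma den_nonneg : 0 <= den.
Proof.
  destruct (Sx_nonempty _ _ _ _ _ _ HS0) as [u Hu]. destruct (proj1 HS0 u Hu) as [Hun _].
  specialize (Hden u u Hun Hu). rewrite dot_vsub_diag in Hden. exact Hden.
Qed.

Lemma cone_comb_dir_le y t eta s u :
  (forall i, (i < n)%nat -> Rabs (dot d (vsub (cone_residual n a x q t) y) (a i)) <= eta) ->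
  argmax_face d n a y (a s) -> argmax_face d n a y (a u) -> (s < n)%nat -> S0 u ->
  dot d (cone_comb n a x t) (vsub (a s) (a u)) <= den + 2 * eta.
Proof.
  intros Hclose [Hs Hsmax] [Hu Humax] Hsn Hu0. destruct (proj1 HS0 u Hu0) as [Hun _].
  set (P := cone_residual n a x q t).
  assert (Hsplit : dot d (cone_comb n a x t) (vsub (a s) (a u))
                   = dot d q (vsub (a s) (a u)) - dot d (vsub P y) (vsub (a s) (a u))
                     - dot d y (vsub (a s) (a u)))
    by (unfold P, cone_residual; rewrite !dot_sub_l; ring).
  assert (Hflat : dot d y (vsub (a s) (a u)) = 0).
  { rewrite dot_sub_r. specialize (Hsmax _ Hu). specialize (Humax _ Hs). lra. }
  pose proof (Hclose s Hsn) as Hcs. pose proof (Hclose u Hun) as Hcu.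
  apply Rabs_le_inv in Hcs. apply Rabs_le_inv in Hcu.
  specialize (Hden s u Hsn Hu0). rewrite Hsplit, Hflat, (dot_sub_r d (a s) (a u) (vsub P y)).
  fold P in Hcs, Hcu. lra.
Qed.

Lemma pwidth_step eta : 0 < eta -> eta < dot d q (vsub xs x) ->
  exists w, PWidth_set d n a w /\
    w * (dot d q (vsub xs x) - eta / 2) <= (den + 2 * eta) * norm d (vsub xs x).
Proof.
  intros Heta Hal. set (al := dot d q (vsub xs x)) in *. set (ne := norm d (vsub xs x)).
  destruct (cone_residual_limit d n a x q eta Heta)
    as [y [t [dl [Hdl [Ht0 [Hup [Hsupp [Hactive Hclose]]]]]]]].
  set (F := argmax_face d n a y). set (r := cone_comb n a x t).
  assert (HFx : F x) by (apply argmax_face_of_vertices; auto).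
  assert (Hcone : in_cone d F x r)
    by (apply cone_comb_in_cone; auto; intros; apply (argmax_face_vertex d n a y x); auto).
  assert (Hr : al - dl / 2 <= dot d r (vsub xs x)).
  { pose proof (conv_dot_sub_le d n a xs x (cone_residual n a x q t) (dl / 2) Hxs Hup) as HPxs.
    unfold cone_residual in HPxs. rewrite dot_sub_l in HPxs. fold r in HPxs. unfold al. lra. }
  assert (Hrne : al - dl / 2 <= norm d r * ne)
    by (eapply Rle_trans; [apply Hr | apply dot_le_norm]).
  assert (Hrnz : ~ veq d r (fun _ => 0)).
  { intro Hz. rewrite dot_sym, (dot_veq_r d r (fun _ => 0)) in Hr by auto.
    unfold dot in Hr. rewrite vsum_zero in Hr by (intros; ring). lra. }
  pose proof (norm_pos_of_nonzero d r Hrnz) as Hr0.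
  pose proof den_nonneg as Hden0.
  set (B0 := (den + 2 * eta) * ne / (al - dl / 2)).
  destruct (PdirW_exists d n a (fun i => (i < n)%nat /\ F (a i)) r x S0 B0) as [w [Hw HwB]].
  - split; [|exact (proj2 HS0)]. intros i Hi. destruct (proj1 HS0 i Hi).
    split; [auto | split; [auto|]]. exact (argmax_face_Sx d n a _ y x S0 i HFx HS0 Hi).
  - intros s u Hs [_ HFs] Hu. rewrite dot_scale_l.
    pose proof (cone_comb_dir_le y t eta s u Hclose HFs
                  (argmax_face_Sx d n a (fun i => (i < n)%nat) y x S0 u HFx HS0 Hu) Hs Hu) as Hsu.
    unfold B0. apply Rmult_le_reg_l with (norm d r); auto.
    rewrite <- Rmult_assoc, Rinv_r, Rmult_1_l by lra. fold r in Hsu.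
    eapply Rle_trans; [apply Hsu|].
    apply Rmult_le_reg_r with (al - dl / 2); [lra|].
    replace (norm d r * ((den + 2 * eta) * ne / (al - dl / 2)) * (al - dl / 2))
      with ((den + 2 * eta) * (norm d r * ne)) by (field; lra).
    apply Rmult_le_compat_l; lra.
  - exists w. split.
    + exists F. split; [apply argmax_face_is_face|]. split; [exists x; auto|].
      exists x, r. auto.
    + pose proof (PdirW_nonneg _ _ _ _ _ _ _ Hw).
      apply Rle_trans with (w * (al - dl / 2)); [apply Rmult_le_compat_l; lra|].
      apply Rmult_le_compat_r with (r := al - dl / 2) in HwB; [|lra].
      unfold B0 in HwB. replace ((den + 2 * eta) * ne / (al - dl / 2) * (al - dl / 2))
        with ((den + 2 * eta) * ne) in HwB by (field; lra). exact HwB.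
Qed.

Lemma pwidth_mul_le pw : is_glb (PWidth_set d n a) pw -> 0 < dot d q (vsub xs x) ->
  pw * dot d q (vsub xs x) <= den * norm d (vsub xs x).
Proof.
  intros [Hlb Hglb] Hal. set (al := dot d q (vsub xs x)) in *. set (ne := norm d (vsub xs x)).
  assert (Hpw : 0 <= pw) by (apply Hglb; intros; eapply PWidth_set_nonneg; eauto).
  apply (le_of_forall_small _ _ (2 * ne + pw / 2) (al / 2)); [lra|]. intros eta Heta.
  destruct (pwidth_step eta ltac:(lra) ltac:(unfold al in *; lra)) as [w [Hw Hbound]].
  fold al ne in Hbound. specialize (Hlb w Hw).
  assert (pw * (al - eta / 2) <= w * (al - eta / 2)) by (apply Rmult_le_compat_r; lra).
  lra.
Qed.

End PyramidalBound.

(** * The objective f *)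

Lemma matvec_add k M u v : matvec k M (vadd u v) = vadd (matvec k M u) (matvec k M v).
Proof.
  apply functional_extensionality; intro i. unfold matvec, vadd.
  rewrite <- vsum_plus. apply vsum_ext; intros; ring.
Qed.

Lemma matvec_sub k M u v : matvec k M (vsub u v) = vsub (matvec k M u) (matvec k M v).
Proof.
  apply functional_extensionality; intro i. unfold matvec, vsub.
  rewrite <- vsum_minus. apply vsum_ext; intros; ring.
Qed.

Lemma matvec_scale k M t u : matvec k M (vscale t u) = vscale t (matvec k M u).
Proof.
  apply functional_extensionality; intro i. unfold matvec, vscale.
  rewrite <- vsum_scal_l. apply vsum_ext; intros; ring.
Qed.

Lemma matvec_veq k M u v : veq k u v -> matvec k M u = matvec k M v.
Proof.
  intros Huv. apply functional_extensionality; intro i. apply vsum_ext; intros; rewrite Huv; auto.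
Qed.

Lemma segment_eq x y t : vadd y (vscale t (vsub x y)) = vadd (vscale t x) (vscale (1 - t) y).
Proof. apply functional_extensionality; intro; unfold vadd, vscale, vsub; ring. Qed.

Lemma growth_arith beta D1 dgap w u G bM MA mu :
  0 < mu -> 0 <= G -> 0 <= w <= MA -> u = dgap + beta ->
  - beta <= D1 -> D1 <= dgap - mu / 2 * w ^ 2 -> Rabs D1 <= G * w -> Rabs beta <= bM ->
  beta ^ 2 + w ^ 2 <= (bM + 3 * G * MA + 2 / mu * (G ^ 2 + 1)) * u.
Proof.
  intros Hmu HG [Hw HwM] Hu Hopt Hsc HD1 Hbeta.
  assert (Hw2 : w ^ 2 <= 2 / mu * u).
  { apply Rmult_le_reg_l with (mu / 2); [lra|].
    replace (mu / 2 * (2 / mu * u)) with u by (field; lra). lra. }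
  assert (Hu0 : 0 <= u) by nra.
  apply Rabs_le_inv in HD1.
  assert (Hb : Rabs beta <= u + G * w).
  { apply Rabs_le. assert (0 <= mu / 2 * w ^ 2) by nra. lra. }
  assert (Hbb : beta ^ 2 <= Rabs beta * (u + G * w)).
  { rewrite <- (pow2_abs beta). pose proof (Rabs_pos beta). nra. }
  assert (Hbu : Rabs beta * u <= bM * u) by (apply Rmult_le_compat_r; auto).
  assert (HGw : Rabs beta * (G * w) <= (u + G * w) * (G * w))
    by (apply Rmult_le_compat_r; [nra | auto]).
  assert (HuGw : u * (G * w) <= G * MA * u).
  { replace (u * (G * w)) with (G * u * w) by ring. replace (G * MA * u) with (G * u * MA) by ring.
    apply Rmult_le_compat_l; nra. }
  assert (HGG : G * w * (G * w) <= 2 / mu * G ^ 2 * u).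
  { replace (G * w * (G * w)) with (G ^ 2 * w ^ 2) by ring.
    replace (2 / mu * G ^ 2 * u) with (G ^ 2 * (2 / mu * u)) by ring.
    apply Rmult_le_compat_l; [apply pow2_ge_0 | auto]. }
  assert (0 <= G * MA * u) by (apply Rmult_le_pos; nra).
  assert (0 <= 2 / mu * u) by (apply Rmult_le_pos; [left; apply Rdiv_lt_0_compat|]; lra).
  nra.
Qed.

Section Objective.
Variables (d n m : nat) (a : nat -> Vec) (A : Mat) (b : Vec) (g : Vec -> R)
  (U : Vec -> Prop) (dg : Vec -> Vec) (mu_g : R) (df : Vec -> Vec) (G M MA : R).
Hypothesis Hn : (0 < n)%nat.
Hypothesis HUD : forall x, in_conv d n a x -> U (matvec d A x).
Hypothesis Hdg : forall y, U y -> has_grad m g (dg y) y.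
Hypothesis Hmug : 0 < mu_g.
Hypothesis Hsc : forall x1 x2, in_conv d n a x1 -> in_conv d n a x2 -> forall t, 0 <= t <= 1 ->
  g (vadd (vscale t (matvec d A x1)) (vscale (1 - t) (matvec d A x2)))
  <= t * g (matvec d A x1) + (1 - t) * g (matvec d A x2)
     - mu_g / 2 * t * (1 - t) * (norm m (vsub (matvec d A x1) (matvec d A x2))) ^ 2.
Hypothesis Hdf : forall x, in_conv d n a x ->
  has_grad d (fun z => g (matvec d A z) + dot d b z) (df x) x.
Hypothesis HG : is_max (fun u => exists x, in_conv d n a x /\ u = norm m (dg (matvec d A x))) G.
Hypothesis HM : is_lub (fun u => exists x y, in_conv d n a x /\ in_conv d n a y /\
  u = norm d (vsub x y)) M.
Hypothesis HMA : is_lub (fun u => exists x y, in_conv d n a x /\ in_conv d n a y /\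
  u = norm m (vsub (matvec d A x) (matvec d A y))) MA.

Definition obj (z : Vec) : R := g (matvec d A z) + dot d b z.

Local Notation inD := (in_conv d n a).

Lemma obj_veq x y : veq d x y -> obj x = obj y.
Proof. intros Hxy. unfold obj. rewrite (matvec_veq d A x y), (dot_veq_r d x y b); auto. Qed.

Lemma obj_convex x y t : inD x -> inD y -> 0 <= t <= 1 ->
  obj (vadd (vscale t x) (vscale (1 - t) y)) <= t * obj x + (1 - t) * obj y.
Proof.
  intros Hx Hy Ht. unfold obj. rewrite matvec_add, !matvec_scale, dot_add_r, !dot_scale_r.
  pose proof (Hsc x y Hx Hy t Ht).
  assert (0 <= mu_g / 2 * t * (1 - t) * norm m (vsub (matvec d A x) (matvec d A y)) ^ 2).
  { apply Rmult_le_pos; [|apply pow2_ge_0]. apply Rmult_le_pos; [|lra]. apply Rmult_le_pos; lra. }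
  lra.
Qed.

Lemma obj_grad_ineq x y : inD x -> inD y -> dot d (df x) (vsub y x) <= obj y - obj x.
Proof.
  intros Hx Hy. apply (grad_dir_ub d obj (df x) x (vsub y x) (obj y - obj x) 0); [apply Hdf; auto|].
  intros t Ht. rewrite segment_eq. pose proof (obj_convex y x t Hy Hx ltac:(lra)). lra.
Qed.

Lemma obj_lower_bound z : inD z -> obj (a 0%nat) - norm d (df (a 0%nat)) * M <= obj z.
Proof.
  intros Hz. pose proof (conv_vertex d n a 0 Hn) as Ha0.
  pose proof (obj_grad_ineq _ _ Ha0 Hz).
  pose proof (cauchy_schwarz d (df (a 0%nat)) (vsub z (a 0%nat))) as Hcs. apply Rabs_le_inv in Hcs.
  assert (norm d (vsub z (a 0%nat)) <= M) by (apply (proj1 HM); exists z, (a 0%nat); auto).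
  pose proof (norm_nonneg d (df (a 0%nat))). nra.
Qed.

Lemma obj_min_exists : exists x1, inD x1 /\ forall y, inD y -> obj x1 <= obj y.
Proof.
  set (simplex := fun l : Vec => (forall i, (i < n)%nat -> 0 <= l i) /\ vsum n l = 1).
  assert (Hin : forall l, simplex l -> inD (comb n a l))
    by (intros l [Hl Hs]; exists l; repeat split; auto).
  destruct (seq_compact_min n simplex (fun l => obj (comb n a l)) 1
              (obj (a 0%nat) - norm d (df (a 0%nat)) * M)) as [l [Hl Hmin]].
  - intros z [Hz Hs] i Hi. rewrite Rabs_right by (apply Rle_ge; auto).
    rewrite <- Hs. apply vsum_term_le; auto.
  - intros X y HX Hcv.
    assert (Hy : simplex y).
    { split.
      - intros i Hi. apply (@Rle_cv_lim (fun _ => 0) (fun k => X k i)); auto; [|apply Un_cv_const].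
        intros; apply HX; auto.
      - apply (UL_sequence (fun k => vsum n (X k))); [apply Un_cv_vsum; auto|].
        rewrite (functional_extensionality _ (fun _ => 1)) by (intros k; apply HX).
        apply Un_cv_const. }
    split; auto. apply (Un_cv_of_has_grad d obj (df (comb n a y))); [apply Hdf, Hin; auto|].
    apply Un_cv_norm_vsub. intros j Hj. unfold comb. apply Un_cv_vsum. intros i Hi.
    apply CV_mult; auto. apply Un_cv_const.
  - exists (fun j => if Nat.eq_dec j 0 then 1 else 0). split.
    + intros i _. destruct (Nat.eq_dec i 0); lra.
    + exact (vsum_delta n (fun _ => 1) 0 Hn).
  - intros z Hz. apply obj_lower_bound, Hin; auto.
  - exists (comb n a l). split; [apply Hin; auto|].
    intros z [lz [Hlz [Hsz Hz]]]. rewrite (obj_veq z (comb n a lz)) by auto. apply Hmin. split; auto.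
Qed.

Lemma quad_growth x x1 : inD x -> inD x1 -> (forall y, inD y -> obj x1 <= obj y) ->
  dot d b (vsub x x1) ^ 2 + norm m (vsub (matvec d A x) (matvec d A x1)) ^ 2
  <= (norm d b * M + 3 * G * MA + 2 / mu_g * (G ^ 2 + 1)) * (obj x - obj x1).
Proof.
  intros Hx Hx1 Hopt.
  set (t1 := matvec d A x1). set (W := vsub (matvec d A x) t1). set (beta := dot d b (vsub x x1)).
  assert (Hseg : forall t, matvec d A (vadd x1 (vscale t (vsub x x1))) = vadd t1 (vscale t W))
    by (intros; rewrite matvec_add, matvec_scale, matvec_sub; reflexivity).
  assert (Hdg1 : has_grad m g (dg t1) t1) by (apply Hdg, HUD; auto).
  assert (Hfirst_order : - beta <= dot m (dg t1) W).
  { apply (grad_dir_lb m g (dg t1) t1 W (- beta) 0 Hdg1). intros t Ht.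
    assert (Hz : inD (vadd x1 (vscale t (vsub x x1))))
      by (rewrite segment_eq; apply conv_convex; auto; lra).
    specialize (Hopt _ Hz). unfold obj in Hopt.
    rewrite Hseg, dot_add_r, dot_scale_r in Hopt. fold t1 beta in Hopt. lra. }
  assert (Hstrong : dot m (dg t1) W <= g (matvec d A x) - g t1 - mu_g / 2 * norm m W ^ 2).
  { apply (grad_dir_ub m g (dg t1) t1 W _ (mu_g / 2 * norm m W ^ 2) Hdg1). intros t Ht.
    pose proof (Hsc x x1 Hx Hx1 t ltac:(lra)) as Hsct.
    rewrite <- segment_eq in Hsct. fold t1 in Hsct. fold W in Hsct. nra. }
  apply (growth_arith beta (dot m (dg t1) W) (g (matvec d A x) - g t1) (norm m W)
           (obj x - obj x1) G (norm d b * M) MA mu_g); auto.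
  - destruct HG as [[z [_ ->]] _]. apply norm_nonneg.
  - split; [apply norm_nonneg|]. apply (proj1 HMA). exists x, x1; auto.
  - unfold obj, beta, t1. rewrite dot_sub_r. ring.
  - eapply Rle_trans; [apply cauchy_schwarz|].
    apply Rmult_le_compat_r; [apply norm_nonneg|]. apply (proj2 HG). exists x1; auto.
  - eapply Rle_trans; [apply cauchy_schwarz|]. apply Rmult_le_compat_l; [apply norm_nonneg|].
    apply (proj1 HM). exists x, x1; auto.
Qed.

Variables (p : nat) (B : Mat) (c : Vec) (theta : R).
Hypothesis Htheta : 0 < theta.
Hypothesis HD : forall x, inD x <-> forall i, (i < p)%nat -> matvec d B x i <= c i.
Hypothesis Hhoff : forall (t : Vec) (s : R),
  let P := fun y => veq m (matvec d A y) t /\ dot d b y = s /\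
                     forall i, (i < p)%nat -> matvec d B y i <= c i in
  (exists y, P y) ->
  forall x, (forall i, (i < p)%nat -> matvec d B x i <= c i) ->
  forall eps, 0 < eps -> exists y, P y /\
    norm d (vsub x y) <= theta * sqrt ((norm m (vsub (matvec d A x) t)) ^ 2
                                         + (dot d b x - s) ^ 2) + eps.

Lemma near_minimizer x x1 eps :
  inD x -> inD x1 -> (forall y, inD y -> obj x1 <= obj y) -> 0 < eps ->
  exists xs, inD xs /\ obj xs = obj x1 /\
    norm d (vsub x xs) <= theta * sqrt ((norm d b * M + 3 * G * MA + 2 / mu_g * (G ^ 2 + 1))
                                        * (obj x - obj x1)) + eps.
Proof.
  intros Hx Hx1 Hopt Heps.
  destruct (Hhoff (matvec d A x1) (dot d b x1)) with (x := x) (eps := eps)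
    as [xs [[HAxs [Hbxs HBxs]] Hdist]]; auto.
  - exists x1. repeat split; auto. apply HD; auto.
  - apply HD; auto.
  - exists xs. split; [apply HD; auto|]. split.
    + unfold obj. rewrite Hbxs. f_equal.
      apply (has_grad_veq m g (dg (matvec d A x1))); [apply Hdg, HUD|]; auto.
    + eapply Rle_trans; [apply Hdist|]. apply Rplus_le_compat_r, Rmult_le_compat_l; [lra|].
      apply sqrt_le_1_alt. rewrite <- dot_sub_r, <- matvec_sub.
      pose proof (quad_growth x x1 Hx Hx1 Hopt). rewrite matvec_sub. lra.
Qed.

Lemma kappa_pos : 0 < norm d b * M + 3 * G * MA + 2 / mu_g * (G ^ 2 + 1).
Proof.
  assert (Hdiam : forall k (phi : Vec -> Vec) L,
    is_lub (fun u => exists x y, inD x /\ inD y /\ u = norm k (vsub (phi x) (phi y))) L -> 0 <= L).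
  { intros k phi L [Hub _]. apply Hub. exists (a 0%nat), (a 0%nat).
    repeat split; [apply conv_vertex; auto | apply conv_vertex; auto | symmetry; apply norm_vsub_diag]. }
  pose proof (Hdiam d (fun z => z) M HM). pose proof (Hdiam m (matvec d A) MA HMA).
  assert (0 <= G) by (destruct HG as [[z [_ ->]] _]; apply norm_nonneg).
  pose proof (norm_nonneg d b).
  assert (0 < 2 / mu_g * (G ^ 2 + 1)) by (apply Rmult_lt_0_compat; [apply Rdiv_lt_0_compat|]; nra).
  nra.
Qed.

Lemma descent_certificate x x1 s v S0 pw eps :
  inD x -> inD x1 -> (forall y, inD y -> obj x1 <= obj y) ->
  (s < n)%nat -> (forall i, (i < n)%nat -> dot d (df x) (a s) <= dot d (df x) (a i)) ->
  in_Sx d n a (fun i => (i < n)%nat) x S0 ->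
  (forall u, S0 u -> dot d (df x) (a u) <= dot d (df x) (a v)) ->
  is_glb (PWidth_set d n a) pw -> obj x1 < obj x -> 0 < eps ->
  exists xs, inD xs /\ obj xs = obj x1 /\
    obj x - obj x1 <= - dot d (df x) (vsub xs x) <= - dot d (df x) (vsub (a s) (a v)) /\
    pw * - dot d (df x) (vsub xs x) <= - dot d (df x) (vsub (a s) (a v)) * norm d (vsub xs x) /\
    0 < norm d (vsub xs x) <=
      theta * sqrt ((norm d b * M + 3 * G * MA + 2 / mu_g * (G ^ 2 + 1)) * (obj x - obj x1)) + eps.
Proof.
  intros Hx Hx1 Hopt Hs Hsmin HS0 Hvmax Hpw Hgap Heps.
  destruct (near_minimizer x x1 eps Hx Hx1 Hopt Heps) as [xs [Hxs [Hfxs Hdist]]].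
  exists xs. split; [auto | split; [auto|]].
  assert (Hal : obj x - obj x1 <= - dot d (df x) (vsub xs x))
    by (pose proof (obj_grad_ineq x xs Hx Hxs); lra).
  assert (Hden : - dot d (df x) (vsub xs x) <= - dot d (df x) (vsub (a s) (a v))).
  { assert (dot d (df x) (a s) <= dot d (df x) xs) by (apply (conv_dot_ge d n a); auto).
    assert (dot d (df x) x <= dot d (df x) (a v))
      by (apply (Sx_dot_le d n a (fun i => (i < n)%nat) x S0); auto).
    rewrite !dot_sub_r. lra. }
  assert (Hmul : pw * dot d (vscale (-1) (df x)) (vsub xs x)
                 <= - dot d (df x) (vsub (a s) (a v)) * norm d (vsub xs x)).
  { apply (pwidth_mul_le d n a x xs _ S0 _ Hx Hxs HS0); auto.
    - intros s' u' Hs' Hu'. rewrite dot_scale_l, !dot_sub_r.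
      specialize (Hsmin s' Hs'). specialize (Hvmax u' Hu'). lra.
    - rewrite dot_scale_l. lra. }
  rewrite dot_scale_l in Hmul.
  split; [lra | split; [lra|]].
  split; [|rewrite norm_vsub_sym; auto].
  pose proof (cauchy_schwarz d (df x) (vsub xs x)) as Hcs. apply Rabs_le_inv in Hcs.
  pose proof (norm_nonneg d (vsub xs x)).
  destruct (Req_dec (norm d (vsub xs x)) 0) as [Hz|]; [|lra].
  rewrite Hz, Rmult_0_r in Hcs. lra.
Qed.

End Objective.

Lemma exists_margin Z c K : 0 < Z -> Z ^ 2 * c < K -> 0 <= K ->
  exists eps, 0 < eps /\ forall ne, 0 < ne -> ne <= Z + eps -> ne ^ 2 * c < K.
Proof.
  intros HZ HZK HK. destruct (Rle_lt_dec c 0) as [Hc|Hc].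
  - exists 1. split; [lra|]. intros ne Hne _.
    destruct (Req_dec c 0) as [->|Hc0]; [lra|].
    assert (ne ^ 2 * c < 0) by (apply Rmult_pos_neg; [apply pow_lt|]; lra). lra.
  - set (Q := K / c).
    assert (HQ : Z ^ 2 < Q).
    { apply Rmult_lt_reg_r with c; [lra|]. unfold Q. replace (K / c * c) with K by (field; lra). lra. }
    assert (HsQ : Z < sqrt Q).
    { rewrite <- (sqrt_pow2 Z) by lra. apply sqrt_lt_1_alt. split; [apply pow2_ge_0 | auto]. }
    exists ((sqrt Q - Z) / 2). split; [lra|]. intros ne Hne Hle.
    assert (Hne2 : ne ^ 2 < Q).
    { rewrite <- (pow2_sqrt Q) by (pose proof (pow2_ge_0 Z); lra).
      assert (ne < sqrt Q) by lra. nra. }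
    replace K with (Q * c) by (unfold Q; field; lra). nra.
Qed.

Lemma sqrt_bound_margin theta kap u pw c' :
  0 < theta -> 0 < kap -> 0 < u -> c' < 1 / (2 * theta ^ 2 * kap) * pw ^ 2 ->
  exists eps, 0 < eps /\ forall ne, 0 < ne -> ne <= theta * sqrt (kap * u) + eps ->
    ne ^ 2 * (2 * c') < pw ^ 2 * u.
Proof.
  intros Htheta Hkap Hu Hc'. assert (Hku : 0 < kap * u) by (apply Rmult_lt_0_compat; auto).
  apply exists_margin; [apply Rmult_lt_0_compat; auto; apply sqrt_lt_R0; auto | | nra].
  rewrite Rpow_mult_distr, pow2_sqrt by lra.
  assert (Hscale : 0 < 2 * theta ^ 2 * kap)
    by (apply Rmult_lt_0_compat; [apply Rmult_lt_0_compat; [lra | apply pow_lt]|]; auto).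
  apply Rmult_lt_compat_r with (r := 2 * theta ^ 2 * kap) in Hc'; [|auto].
  replace (1 / (2 * theta ^ 2 * kap) * pw ^ 2 * (2 * theta ^ 2 * kap)) with (pw ^ 2) in Hc'
    by (field; lra).
  nra.
Qed.

Lemma value_lower_bound u al den pw ne c :
  0 < u <= al -> al <= den -> 0 <= pw -> 0 < ne -> pw * al <= den * ne ->
  ne ^ 2 * (2 * c) < pw ^ 2 * u ->
  c < 1 / (2 * (al / den) ^ 2) * (2 * al - u).
Proof.
  intros [Hu Hual] Hden Hpw Hne Hmul Hc.
  replace (1 / (2 * (al / den) ^ 2) * (2 * al - u)) with (den ^ 2 * (2 * al - u) / (2 * al ^ 2))
    by (field; lra).
  assert (Hsq : pw ^ 2 * al ^ 2 <= den ^ 2 * ne ^ 2).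
  { replace (pw ^ 2 * al ^ 2) with ((pw * al) * (pw * al)) by ring.
    replace (den ^ 2 * ne ^ 2) with ((den * ne) * (den * ne)) by ring.
    apply Rmult_le_compat; nra. }
  assert (Hkey : ne ^ 2 * (2 * c * al ^ 2) < ne ^ 2 * (den ^ 2 * (2 * al - u))).
  { assert (ne ^ 2 * (2 * c) * al ^ 2 < pw ^ 2 * u * al ^ 2) by (apply Rmult_lt_compat_r; nra).
    assert (pw ^ 2 * al ^ 2 * u <= den ^ 2 * ne ^ 2 * u) by (apply Rmult_le_compat_r; lra).
    assert (den ^ 2 * ne ^ 2 * u <= den ^ 2 * ne ^ 2 * (2 * al - u))
      by (apply Rmult_le_compat_l; nra).
    nra. }
  apply Rmult_lt_reg_l in Hkey; [|nra].
  apply Rmult_lt_reg_r with (2 * al ^ 2); [nra|].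
  replace (den ^ 2 * (2 * al - u) / (2 * al ^ 2) * (2 * al ^ 2)) with (den ^ 2 * (2 * al - u))
    by (field; lra).
  lra.
Qed.

Theorem mainTheorem11
  (d n m p : nat) (a : nat -> Vec)
  (Hn : (0 < n)%nat)
  (Hdist : forall i j, (i < n)%nat -> (j < n)%nat -> i <> j -> ~ veq d (a i) (a j))
  (* D = conv(A) = {x : Bx <= c} *)
  (B : Mat) (c : Vec)
  (HD : forall x, in_conv d n a x <-> forall i, (i < p)%nat -> matvec d B x i <= c i)
  (* f(x) = g(Ax) + <b,x> *)
  (A : Mat) (b : Vec) (g : Vec -> R)
  (U : Vec -> Prop) (dg : Vec -> Vec)
  (HUo : is_open_in m U)
  (HUD : forall x, in_conv d n a x -> U (matvec d A x))
  (Hdg : forall y, U y -> has_grad m g (dg y) y)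
  (Hdgc : forall y, U y -> forall eps, 0 < eps -> exists delta, 0 < delta /\
            forall z, U z -> norm m (vsub z y) < delta -> norm m (vsub (dg z) (dg y)) < eps)
  (mu_g : R) (Hmug : 0 < mu_g)
  (Hsc : forall x1 x2, in_conv d n a x1 -> in_conv d n a x2 -> forall t, 0 <= t <= 1 ->
          g (vadd (vscale t (matvec d A x1)) (vscale (1 - t) (matvec d A x2)))
          <= t * g (matvec d A x1) + (1 - t) * g (matvec d A x2)
             - mu_g / 2 * t * (1 - t) * (norm m (vsub (matvec d A x1) (matvec d A x2))) ^ 2)
  (df : Vec -> Vec)
  (Hdf : forall x, in_conv d n a x ->
          has_grad d (fun z => g (matvec d A z) + dot d b z) (df x) x)
  (G M MA : R)
  (HG : is_max (fun u => exists x, in_conv d n a x /\ u = norm m (dg (matvec d A x))) G)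
  (HM : is_lub (fun u => exists x y, in_conv d n a x /\ in_conv d n a y /\
                  u = norm d (vsub x y)) M)
  (HMA : is_lub (fun u => exists x y, in_conv d n a x /\ in_conv d n a y /\
                  u = norm m (vsub (matvec d A x) (matvec d A y))) MA)
  (* theta is a Hoffman constant *)
  (theta : R) (Htheta : 0 < theta)
  (Hhoff : forall (t : Vec) (s : R),
     let P := fun y => veq m (matvec d A y) t /\ dot d b y = s /\
                        forall i, (i < p)%nat -> matvec d B y i <= c i in
     (exists y, P y) ->
     forall x, (forall i, (i < p)%nat -> matvec d B x i <= c i) ->
     forall eps, 0 < eps -> exists y, P y /\
       norm d (vsub x y) <= theta * sqrt ((norm m (vsub (matvec d A x) t)) ^ 2
                                            + (dot d b x - s) ^ 2) + eps)
  (pw : R) (Hpw : is_glb (PWidth_set d n a) pw) :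
  let f := fun z => g (matvec d A z) + dot d b z in
  let inD := in_conv d n a in
  let Xstar := fun x => inD x /\ forall y, inD y -> f x <= f y in
  let mu := 1 / (2 * theta ^ 2 * (norm d b * M + 3 * G * MA + 2 / mu_g * (G ^ 2 + 1))) in
  (* tilde mu_f >= mu * PWidth(A)^2, with inf/sup unfolded *)
  forall x, inD x -> ~ Xstar x ->
  forall s v,
    (* s_f(x) = a s *)
    ((s < n)%nat /\ forall i, (i < n)%nat -> dot d (df x) (a s) <= dot d (df x) (a i)) ->
    (* v_f(x) = a v *)
    (exists S, in_Sx d n a (fun i => (i < n)%nat) x S /\ S v /\
       (forall u, S u -> dot d (df x) (a u) <= dot d (df x) (a v)) /\
       forall S' v', in_Sx d n a (fun i => (i < n)%nat) x S' -> S' v' ->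
         (forall u, S' u -> dot d (df x) (a u) <= dot d (df x) (a v')) ->
         dot d (df x) (a v) <= dot d (df x) (a v')) ->
    sup_ge (fun y => exists xs, Xstar xs /\ dot d (df x) (vsub xs x) < 0 /\
              let gam := (- dot d (df x) (vsub xs x)) /
                         (- dot d (df x) (vsub (a s) (a v))) in
              y = 1 / (2 * gam ^ 2) * (f xs - f x - 2 * dot d (df x) (vsub xs x)))
           (mu * pw ^ 2).

Proof.
  intros f inD Xstar mu x Hx Hnx s v [Hs Hsmin] [S0 [HS0 [HSv [HSmax _]]]].
  destruct (obj_min_exists d n m a A b g mu_g df M Hn Hmug Hsc Hdf HM) as [x1 [Hx1 Hopt]].
  assert (Hgap : f x1 < f x).
  { apply Rnot_le_lt. intros Hle. apply Hnx. split; auto.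
    intros y Hy. specialize (Hopt y Hy). unfold obj in Hopt. unfold f in *. lra. }
  pose proof (kappa_pos d n m a A b dg mu_g G M MA Hn Hmug HG HM HMA) as Hkap.
  set (kap := norm d b * M + 3 * G * MA + 2 / mu_g * (G ^ 2 + 1)) in *.
  set (u := f x - f x1). assert (Hu : 0 < u) by (unfold u; lra).
  assert (Hpw0 : 0 <= pw) by (apply (proj2 Hpw); intros; eapply PWidth_set_nonneg; eauto).
  intros c' Hc'.
  destruct (sqrt_bound_margin theta kap u pw c' Htheta Hkap Hu Hc') as [eps [Heps Hmargin]].
  destruct (descent_certificate d n m a A b g U dg mu_g df G M MA HUD Hdg Hmug Hsc Hdf HG HM HMA
              p B c theta Htheta HD Hhoff x x1 s v S0 pw eps Hx Hx1 Hopt Hs Hsmin HS0 HSmax Hpw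
              Hgap Heps) as [xs [Hxs [Hfxs [Hal [Hmul Hne]]]]].
  change (f xs = f x1) in Hfxs. change (obj d A b g x - obj d A b g x1) with u in Hal, Hne.
  fold kap in Hne.
  exists (1 / (2 * ((- dot d (df x) (vsub xs x)) / (- dot d (df x) (vsub (a s) (a v)))) ^ 2)
            * (2 * (- dot d (df x) (vsub xs x)) - u)).
  split.
  - exists xs. split; [split; [auto | intros y Hy; rewrite Hfxs; apply Hopt; auto]|].
    split; [lra|]. cbv zeta. unfold u. rewrite Hfxs. f_equal. ring.
  - apply (value_lower_bound u _ _ pw (norm d (vsub xs x))); try lra.
    apply Hmargin; lra.
Qed.
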